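(* CTL*$_{cd}$ is strictly more expressive than CTL* and is incomparable with the modal $\mu$-calculus. Precisely: (1) every CTL* state formula is a CTL*$_{cd}$ state formula, and there is a CTL*$_{cd}$ state formula $\varphi$ such that no CTL* state formula $\chi$ satisfies ($\mathcal K\models\varphi\iff\mathcal K\models\chi$) for all Kripke structures $\mathcal K$; (2) there is a CTL*$_{cd}$ state formula not equivalent (over all Kripke structures, evaluated at the initial world) to any modal $\mu$-calculus formula; (3) there is a modal $\mu$-calculus formula (e.g. $\nu x.\,(p\wedge\Box\Box x)$) not equivalent (over all Kripke structures, evaluated at the initial world) to any CTL*$_{cd}$ state formula.
   Context: A Kripke structure over a finite set $AP$ of atomic propositions is a tuple $\mathcal K=(AP,W,R,L,w_I)$ where $W$ is a countable non-empty set of worlds, $w_I\in W$ is the initial world, $R\subseteq W\times W$ is a left-total transition relation (every world has at least one $R$-successor), and $L:W\to 2^{AP}$ is a labelling function. A path is an infinite sequence $\pi=\pi_0\pi_1\cdots$ of worlds with $(\pi_i,\pi_{i+1})\in R$ for all $i\in\mathbb N$; $\mathrm{Pth}(w)$ is the set of paths with $\pi_0=w$. A path $\pi$ is a cycle if for every $i\in\mathbb N$ there is $j>i$ with $\pi_j=\pi_0$ (i.e. $\pi_0$ occurs infinitely often in $\pi$); $\mathrm{Cyc}(w)$ is the set of cycles with $\pi_0=w$. Syntax of CTL*$_{cd}$: state formulas $\varphi::=p\mid\neg\varphi\mid\varphi\wedge\varphi\mid\varphi\vee\varphi\mid \mathsf E\psi\mid\mathsf A\psi\mid\mathsf E^{c}\psi\mid\mathsf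 A^{c}\psi$ with $p\in AP$; path formulas $\psi::=\varphi\mid\neg\psi\mid\psi\wedge\psi\mid\psi\vee\psi\mid\mathsf X\psi\mid\psi\,\mathsf U\,\psi$. Semantics: $\mathcal K,w\models p$ iff $p\in L(w)$; Boolean connectives as usual; $\mathcal K,w\models\mathsf E\psi$ iff some $\pi\in\mathrm{Pth}(w)$ has $\mathcal K,\pi,0\models\psi$; $\mathcal K,w\models\mathsf A\psi$ iff every $\pi\in\mathrm{Pth}(w)$ has $\mathcal K,\pi,0\models\psi$; $\mathcal K,w\models\mathsf E^{c}\psi$ iff some $\pi\in\mathrm{Cyc}(w)$ has $\mathcal K,\pi,0\models\psi$; $\mathcal K,w\models\mathsf A^{c}\psi$ iff every $\pi\in\mathrm{Cyc}(w)$ has $\mathcal K,\pi,0\models\psi$. For paths: $\mathcal K,\pi,i\models\varphi$ (state formula) iff $\mathcal K,\pi_i\models\varphi$; Boolean connectives as usual; $\mathcal K,\pi,i\models\mathsf X\psi$ iff $\mathcal K,\pi,i+1\models\psi$; $\mathcal K,\pi,i\models\psi_1\mathsf U\psi_2$ iff there is $k\ge0$ with $\mathcal K,\pi,i+k\models\psi_2$ and $\mathcal K,\pi,i+j\models\psi_1$ for all $0\le j<k$. $\mathcal K\models\varphi$ iff $\mathcal K,w_I\models\varphi$. CTL* is the fragment of CTL*$_{cd}$ without the operators $\mathsf E^c,\mathsf A^c$. The modal $\mu$-calculus is the standard one, interpreted over Kripke structures at the initial world, with $\Box$ the universal successor modality. *)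

From Stdlib Require Import List.
Set Implicit Arguments.

Record Kripke (AP : Type) : Type := {
  W : Type;
  R : W -> W -> Prop;
  L : W -> AP -> Prop;
  wI : W;
  W_countable : exists f : W -> nat, forall x y, f x = f y -> x = y;
  R_total : forall w, exists v, R w v
}.
Arguments W {AP}. Arguments R {AP}. Arguments L {AP}. Arguments wI {AP}.

Definition is_path {AP} (K : Kripke AP) (pi : nat -> W K) : Prop :=
  forall i, R K (pi i) (pi (S i)).

Definition Pth {AP} (K : Kripke AP) (w : W K) (pi : nat -> W K) : Prop :=
  is_path K pi /\ pi 0 = w.

Definition is_cycle {AP} (K : Kripke AP) (pi : nat -> W K) : Prop :=
  is_path K pi /\ forall i, exists j, i < j /\ pi j = pi 0.

Definition Cyc {AP} (K : Kripke AP) (w : W K) (pi : nat -> W K) : Prop :=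
  is_cycle K pi /\ pi 0 = w.

Inductive sform (AP : Type) : Type :=
| SAtom : AP -> sform AP
| SNeg : sform AP -> sform AP
| SAnd : sform AP -> sform AP -> sform AP
| SOr : sform AP -> sform AP -> sform AP
| SE : pform AP -> sform AP
| SA : pform AP -> sform AP
| SEc : pform AP -> sform AP
| SAc : pform AP -> sform AP
with pform (AP : Type) : Type :=
| PState : sform AP -> pform AP
| PNeg : pform AP -> pform AP
| PAnd : pform AP -> pform AP -> pform AP
| POr : pform AP -> pform AP -> pform AP
| PX : pform AP -> pform AP
| PU : pform AP -> pform AP -> pform AP.

Arguments SAtom {AP}. Arguments SNeg {AP}. Arguments SAnd {AP}. Arguments SOr {AP}.
Arguments SE {AP}. Arguments SA {AP}. Arguments SEc {AP}. Arguments SAc {AP}.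
Arguments PState {AP}. Arguments PNeg {AP}. Arguments PAnd {AP}. Arguments POr {AP}.
Arguments PX {AP}. Arguments PU {AP}.

Fixpoint sat_s {AP} (K : Kripke AP) (w : W K) (f : sform AP) {struct f} : Prop :=
  match f with
  | SAtom p => L K w p
  | SNeg g => ~ sat_s K w g
  | SAnd g h => sat_s K w g /\ sat_s K w h
  | SOr g h => sat_s K w g \/ sat_s K w h
  | SE psi => exists pi, Pth K w pi /\ sat_p K pi 0 psi
  | SA psi => forall pi, Pth K w pi -> sat_p K pi 0 psi
  | SEc psi => exists pi, Cyc K w pi /\ sat_p K pi 0 psi
  | SAc psi => forall pi, Cyc K w pi -> sat_p K pi 0 psi
  end
with sat_p {AP} (K : Kripke AP) (pi : nat -> W K) (i : nat) (psi : pform AP)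
  {struct psi} : Prop :=
  match psi with
  | PState g => sat_s K (pi i) g
  | PNeg a => ~ sat_p K pi i a
  | PAnd a b => sat_p K pi i a /\ sat_p K pi i b
  | POr a b => sat_p K pi i a \/ sat_p K pi i b
  | PX a => sat_p K pi (S i) a
  | PU a b => exists k, sat_p K pi (i + k) b /\
                        forall j, j < k -> sat_p K pi (i + j) a
  end.

Definition models {AP} (K : Kripke AP) (f : sform AP) : Prop := sat_s K (wI K) f.

Fixpoint is_ctls_s {AP} (f : sform AP) : Prop :=
  match f with
  | SAtom _ => True
  | SNeg g => is_ctls_s g
  | SAnd g h | SOr g h => is_ctls_s g /\ is_ctls_s h
  | SE psi | SA psi => is_ctls_p psi
  | SEc _ | SAc _ => False
  end
with is_ctls_p {AP} (psi : pform AP) : Prop :=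
  match psi with
  | PState g => is_ctls_s g
  | PNeg a | PX a => is_ctls_p a
  | PAnd a b | POr a b | PU a b => is_ctls_p a /\ is_ctls_p b
  end.

(** * The modal mu-calculus (negation normal form, variables indexed by nat) *)
Inductive mu (AP : Type) : Type :=
| MVar : nat -> mu AP
| MTrue : mu AP
| MFalse : mu AP
| MAtom : AP -> mu AP
| MNAtom : AP -> mu AP
| MAnd : mu AP -> mu AP -> mu AP
| MOr : mu AP -> mu AP -> mu AP
| MDia : mu AP -> mu AP
| MBox : mu AP -> mu AP
| MMu : nat -> mu AP -> mu AP
| MNu : nat -> mu AP -> mu AP.

Arguments MVar {AP}. Arguments MTrue {AP}. Arguments MFalse {AP}.
Arguments MAtom {AP}. Arguments MNAtom {AP}. Arguments MAnd {AP}. Arguments MOr {AP}.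
Arguments MDia {AP}. Arguments MBox {AP}. Arguments MMu {AP}. Arguments MNu {AP}.

Definition upd {X : Type} (V : nat -> X -> Prop) (x : nat) (S : X -> Prop)
  : nat -> X -> Prop := fun y => if Nat.eqb y x then S else V y.

Fixpoint msem {AP} (K : Kripke AP) (V : nat -> W K -> Prop) (f : mu AP)
  : W K -> Prop :=
  match f with
  | MVar x => V x
  | MTrue => fun _ => True
  | MFalse => fun _ => False
  | MAtom p => fun w => L K w p
  | MNAtom p => fun w => ~ L K w p
  | MAnd a b => fun w => msem K V a w /\ msem K V b w
  | MOr a b => fun w => msem K V a w \/ msem K V b w
  | MDia a => fun w => exists v, R K w v /\ msem K V a v
  | MBox a => fun w => forall v, R K w v -> msem K V a v
  (* least fixpoint = intersection of all pre-fixed points *)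
  | MMu x a => fun w => forall S : W K -> Prop,
                 (forall v, msem K (upd V x S) a v -> S v) -> S w
  (* greatest fixpoint = union of all post-fixed points *)
  | MNu x a => fun w => exists S : W K -> Prop,
                 (forall v, S v -> msem K (upd V x S) a v) /\ S w
  end.

(** K |= chi, at the initial world (free variables denote the empty set) *)
Definition mu_models {AP} (K : Kripke AP) (f : mu AP) : Prop :=
  msem K (fun _ _ => False) f (wI K).

(* The formula E^c p separates a single reflexive world from the infinite ray
   0 -> 1 -> 2 -> ..., every proposition being true everywhere: the loop lies
   on a cycle, the ray on none.  The ray maps onto the loop by a morphism that
   preserves labels and transitions and lifts both successors and whole paths;
   CTL* and the mu-calculus are invariant under such morphisms, so neither can
   tell the two structures apart.

   Conversely, on the chains n -> n-1 -> ... -> 0 -> sink (the sink looping),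
   with p false exactly at 0, the formula nu x.(p /\ [][]x) holds at n iff n is
   odd.  The worlds n lie on no cycle and have a unique path, so there E^c and
   A^c are trivial and E, A both read that path; as for LTL on the words
   p^n (~p) p^omega, the truth of any CTL*_cd formula at n is then eventually
   constant in n. *)
From Stdlib Require Import List Arith Lia Setoid FunctionalExtensionality.

Scheme sform_ind' := Induction for sform Sort Prop
  with pform_ind' := Induction for pform Sort Prop.
Combined Scheme form_mut from sform_ind', pform_ind'.

Definition reroot {AP} (K : Kripke AP) (w : W K) : Kripke AP :=
  {| W := W K; R := R K; L := L K; wI := w;
     W_countable := W_countable K; R_total := R_total K |}.

Lemma sat_reroot {AP} (K : Kripke AP) (v : W K) :
  (forall f (w : W K), sat_s (reroot K v) w f <-> sat_s K w f) /\
  (forall psi (pi : nat -> W K) i, sat_p (reroot K v) pi i psi <-> sat_p K pi i psi).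
Proof.
  apply (form_mut AP
    (fun f => forall w : W K, sat_s (reroot K v) w f <-> sat_s K w f)
    (fun psi => forall (pi : nat -> W K) i,
       sat_p (reroot K v) pi i psi <-> sat_p K pi i psi));
    intros; simpl; firstorder.
Qed.

Lemma models_reroot {AP} (K : Kripke AP) (w : W K) f :
  models (reroot K w) f <-> sat_s K w f.
Proof. exact (proj1 (sat_reroot K w) f w). Qed.

Lemma sat_p_shift {AP} (K : Kripke AP) psi : forall pi i k,
  sat_p K pi (i + k) psi <-> sat_p K (fun m => pi (i + m)) k psi.
Proof.
  induction psi; intros pi i k; simpl; try reflexivity.
  - now rewrite IHpsi.
  - now rewrite IHpsi1, IHpsi2.
  - now rewrite IHpsi1, IHpsi2.
  - now rewrite <- Nat.add_succ_r.
  - setoid_rewrite <- IHpsi1. setoid_rewrite <- IHpsi2.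
    setoid_rewrite Nat.add_assoc. reflexivity.
Qed.

Lemma sat_PU_unfold {AP} (K : Kripke AP) pi i a b :
  sat_p K pi i (PU a b) <->
  sat_p K pi i b \/ (sat_p K pi i a /\ sat_p K pi (S i) (PU a b)).
Proof.
  simpl. split.
  - intros [[|k] [Hb Ha]].
    + left; now rewrite Nat.add_0_r in Hb.
    + right; split.
      * rewrite <- (Nat.add_0_r i). apply Ha; lia.
      * exists k; split; [now rewrite <- Nat.add_succ_r|].
        intros j Hj; rewrite <- Nat.add_succ_r; apply Ha; lia.
  - intros [Hb | [Ha [k [Hb Hk]]]].
    + exists 0; split; [now rewrite Nat.add_0_r | intros; lia].
    + exists (S k); split; [now rewrite Nat.add_succ_r|].
      intros [|j] Hj; [now rewrite Nat.add_0_r|].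
      rewrite Nat.add_succ_r; apply Hk; lia.
Qed.

Lemma upd_mono {X : Type} (V V' : nat -> X -> Prop) n (S S' : X -> Prop) :
  (forall x w, V x w -> V' x w) -> (forall w, S w -> S' w) ->
  forall x w, upd V n S x w -> upd V' n S' x w.
Proof. intros HV HS x w; unfold upd; destruct (Nat.eqb x n); auto. Qed.

Lemma msem_mono {AP} (K : Kripke AP) (f : mu AP) : forall V V',
  (forall x w, V x w -> V' x w) -> forall w, msem K V f w -> msem K V' f w.
Proof.
  induction f; intros V V' HV w; simpl; auto.
  - intros [H1 H2]; split; [eapply IHf1|eapply IHf2]; eauto.
  - intros [H1|H2]; [left; eapply IHf1|right; eapply IHf2]; eauto.
  - intros [v [Hr Hv]]; exists v; split; auto; eapply IHf; eauto.
  - intros H v Hr; eapply IHf; eauto.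
  - intros H S HS. apply H. intros v Hv. apply HS.
    eapply IHf; [|exact Hv]. apply upd_mono; auto.
  - intros [S [HS Hw]]. exists S; split; auto. intros v Hv.
    eapply IHf; [|apply HS, Hv]. apply upd_mono; auto.
Qed.

Section Morphism.
Variables (AP : Type) (K1 K2 : Kripke AP) (h : W K2 -> W K1).
Hypothesis h_label : forall w a, L K2 w a <-> L K1 (h w) a.
Hypothesis h_forth : forall w v, R K2 w v -> R K1 (h w) (h v).

Lemma Pth_map w pi : Pth K2 w pi -> Pth K1 (h w) (fun i => h (pi i)).
Proof. intros [Hpi H0]; split; [intro i; apply h_forth, Hpi | simpl; now rewrite H0]. Qed.

Section PathLifting.
Hypothesis h_lift : forall w pi1, Pth K1 (h w) pi1 ->
  exists pi2, Pth K2 w pi2 /\ (fun i => h (pi2 i)) = pi1.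

Lemma ctls_invariant_morphism :
  (forall f, is_ctls_s f -> forall w, sat_s K2 w f <-> sat_s K1 (h w) f) /\
  (forall psi, is_ctls_p psi -> forall pi i,
      sat_p K2 pi i psi <-> sat_p K1 (fun k => h (pi k)) i psi).
Proof.
  apply (form_mut AP
    (fun f => is_ctls_s f -> forall w, sat_s K2 w f <-> sat_s K1 (h w) f)
    (fun psi => is_ctls_p psi -> forall pi i,
      sat_p K2 pi i psi <-> sat_p K1 (fun k => h (pi k)) i psi));
    simpl.
  - intros a _ w. apply h_label.
  - intros g IH Hg w. now rewrite IH.
  - intros g IHg g' IHg' [Hg Hg'] w. now rewrite IHg, IHg'.
  - intros g IHg g' IHg' [Hg Hg'] w. now rewrite IHg, IHg'.
  - intros psi IH Hpsi w; split.
    + intros [pi [Hpi Hs]]. exists (fun k => h (pi k)).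
      split; [now apply Pth_map | now apply IH].
    + intros [pi1 [Hpi1 Hs]]. destruct (h_lift _ _ Hpi1) as [pi2 [Hpi2 <-]].
      exists pi2. split; [exact Hpi2 | now apply IH].
  - intros psi IH Hpsi w; split.
    + intros H pi1 Hpi1. destruct (h_lift _ _ Hpi1) as [pi2 [Hpi2 <-]].
      now apply IH, H.
    + intros H pi Hpi. now apply IH, H, Pth_map.
  - tauto.
  - tauto.
  - intros g IH Hg pi i. now apply IH.
  - intros a IH Ha pi i. now rewrite IH.
  - intros a IHa b IHb [Ha Hb] pi i. now rewrite IHa, IHb.
  - intros a IHa b IHb [Ha Hb] pi i. now rewrite IHa, IHb.
  - intros a IH Ha pi i. now apply IH.
  - intros a IHa b IHb [Ha Hb] pi i.
    setoid_rewrite (IHa Ha). setoid_rewrite (IHb Hb). reflexivity.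
Qed.

End PathLifting.

Section Back.
Hypothesis h_back : forall w u, R K1 (h w) u -> exists v, R K2 w v /\ h v = u.

Lemma upd_pullback (V1 : nat -> W K1 -> Prop) V2 n S1 S2 :
  (forall x w, V2 x w <-> V1 x (h w)) -> (forall w, S2 w <-> S1 (h w)) ->
  forall x w, upd V2 n S2 x w <-> upd V1 n S1 x (h w).
Proof. intros HV HS x w; unfold upd; destruct (Nat.eqb x n); auto. Qed.

Lemma msem_invariant_morphism (f : mu AP) : forall V1 V2,
  (forall x w, V2 x w <-> V1 x (h w)) ->
  forall w, msem K2 V2 f w <-> msem K1 V1 f (h w).
Proof.
  induction f; intros V1 V2 HV w; simpl.
  - apply HV.
  - tauto.
  - tauto.
  - apply h_label.
  - now rewrite h_label.
  - now rewrite (IHf1 V1 V2 HV), (IHf2 V1 V2 HV).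
  - now rewrite (IHf1 V1 V2 HV), (IHf2 V1 V2 HV).
  - split.
    + intros [v [Hr Hv]]. exists (h v). split; auto. now apply (IHf V1 V2 HV).
    + intros [u [Hr Hu]]. destruct (h_back _ _ Hr) as [v [Hr' <-]].
      exists v; split; auto. now apply (IHf V1 V2 HV).
  - split.
    + intros H u Hr. destruct (h_back _ _ Hr) as [v [Hr' <-]].
      now apply (IHf V1 V2 HV), H.
    + intros H v Hr. now apply (IHf V1 V2 HV), H, h_forth.
  - split.
    + intros H S1 HS1. apply (H (fun u => S1 (h u))). intros v Hv. apply HS1.
      apply (IHf _ (upd V2 n (fun u => S1 (h u)))); auto.
      apply upd_pullback; tauto.
    + (* witness: the worlds of K1 all of whose preimages lie in S2 *)
      intros H S2 HS2.
      apply (H (fun u => forall w', h w' = u -> S2 w')); [|reflexivity].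
      intros u Hu w' <-. apply HS2.
      apply msem_mono with (V := upd V2 n (fun v => forall w', h w' = h v -> S2 w')).
      { apply upd_mono; auto. }
      apply (IHf (upd V1 n (fun u => forall w', h w' = u -> S2 w'))); auto.
      apply upd_pullback; tauto.
  - split.
    + (* witness: the image of S2 *)
      intros [S2 [HS2 Hw]].
      exists (fun u => exists w', h w' = u /\ S2 w'). split; [|now exists w].
      intros u [w' [<- Hw']].
      apply (IHf _ (upd V2 n (fun v => exists w', h w' = h v /\ S2 w'))).
      { apply upd_pullback; tauto. }
      apply msem_mono with (V := upd V2 n S2); [apply upd_mono; eauto | now apply HS2].
    + intros [S1 [HS1 Hw]]. exists (fun u => S1 (h u)). split; auto.
      intros v Hv. apply (IHf (upd V1 n S1)); [apply upd_pullback; tauto | now apply HS1].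
Qed.

End Back.
End Morphism.

Definition countdown_step (w : option nat) : option nat :=
  match w with Some (S j) => Some j | _ => None end.

Definition countdown (AP : Type) : Kripke AP.
Proof.
  refine {| W := option nat; R := fun w v => v = countdown_step w;
            L := fun w _ => w <> Some 0; wI := None |}.
  - exists (fun o => match o with None => 0 | Some n => S n end).
    intros [a|] [b|]; congruence.
  - intros w; now exists (countdown_step w).
Defined.

Definition countdown_run (w : option nat) (k : nat) : option nat :=
  Nat.iter k countdown_step w.

Lemma countdown_run_add w i m :
  countdown_run w (i + m) = countdown_run (countdown_run w i) m.
Proof.
  induction m; [now rewrite Nat.add_0_r|].
  rewrite Nat.add_succ_r; simpl; now rewrite IHm.
Qed.

Lemma countdown_run_Some k j :
  countdown_run (Some j) k = if k <=? j then Some (j - k) else None.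
Proof.
  induction k; [simpl; now rewrite Nat.sub_0_r|].
  change (countdown_run (Some j) (S k)) with (countdown_step (countdown_run (Some j) k)).
  rewrite IHk.
  destruct (Nat.leb_spec k j), (Nat.leb_spec (S k) j); try lia; simpl.
  - now replace (j - k) with (S (j - S k)) by lia.
  - now replace (j - k) with 0 by lia.
  - reflexivity.
Qed.

Definition eventually_stable (P : nat -> Prop) : Prop :=
  exists N, forall j, N <= j -> (P (S j) <-> P j).

Lemma eventually_stable_const P :
  eventually_stable P -> exists N, forall n, N <= n -> (P n <-> P N).
Proof.
  intros [N HN]; exists N; intros n Hn.
  induction Hn; [reflexivity|]. rewrite HN by lia; exact IHHn.
Qed.

Section Countdown.
Variable AP : Type.
Local Notation C := (countdown AP).

Lemma countdown_Pth w : Pth C w (countdown_run w).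
Proof. now split. Qed.

Lemma countdown_Pth_unique w pi : Pth C w pi -> pi = countdown_run w.
Proof.
  intros [Hpi H0]. apply functional_extensionality; intro k.
  induction k; [exact H0|]. simpl; rewrite <- IHk; apply Hpi.
Qed.

Lemma countdown_no_Cyc j pi : ~ Cyc C (Some j) pi.
Proof.
  intros [[Hpi Hcyc] H0].
  assert (Hrun : pi = countdown_run (Some j)) by now apply countdown_Pth_unique.
  destruct (Hcyc 0) as [k [Hk Hret]]. rewrite Hrun, !countdown_run_Some in Hret.
  destruct (Nat.leb_spec k j); simpl in Hret; [injection Hret; lia | discriminate].
Qed.

Lemma sat_SE_countdown w psi :
  sat_s C w (SE psi) <-> sat_p C (countdown_run w) 0 psi.
Proof.
  simpl; split.
  - intros [pi [Hpi H]]. now rewrite (countdown_Pth_unique _ _ Hpi) in H.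
  - intros H; exists (countdown_run w); split; [apply countdown_Pth | exact H].
Qed.

Lemma sat_SA_countdown w psi :
  sat_s C w (SA psi) <-> sat_p C (countdown_run w) 0 psi.
Proof.
  simpl; split.
  - intros H; apply H, countdown_Pth.
  - intros H pi Hpi. now rewrite (countdown_Pth_unique _ _ Hpi).
Qed.

Lemma sat_p_countdown_run psi w k :
  sat_p C (countdown_run w) k psi <->
  sat_p C (countdown_run (countdown_run w k)) 0 psi.
Proof.
  rewrite <- (Nat.add_0_r k) at 1. rewrite sat_p_shift.
  replace (fun m => countdown_run w (k + m)) with (countdown_run (countdown_run w k));
    [reflexivity|].
  apply functional_extensionality; intro m; now rewrite countdown_run_add.
Qed.

Lemma sat_PX_countdown w a :
  sat_p C (countdown_run w) 0 (PX a) <-> sat_p C (countdown_run (countdown_step w)) 0 a.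
Proof. exact (sat_p_countdown_run a w 1). Qed.

Lemma sat_PU_countdown w a b :
  sat_p C (countdown_run w) 0 (PU a b) <->
  sat_p C (countdown_run w) 0 b \/
  (sat_p C (countdown_run w) 0 a /\ sat_p C (countdown_run (countdown_step w)) 0 (PU a b)).
Proof. rewrite sat_PU_unfold. now rewrite (sat_p_countdown_run (PU a b) w 1). Qed.

Lemma countdown_eventually_stable :
  (forall f, eventually_stable (fun j => sat_s C (Some j) f)) /\
  (forall psi, eventually_stable (fun j => sat_p C (countdown_run (Some j)) 0 psi)).
Proof.
  apply (form_mut AP (fun f => eventually_stable (fun j => sat_s C (Some j) f))
     (fun psi => eventually_stable (fun j => sat_p C (countdown_run (Some j)) 0 psi))).
  - intros a. exists 1; intros j Hj; simpl. split; intros _ H; injection H; lia.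
  - intros g [N H]; exists N; intros j Hj; simpl; now rewrite H.
  - intros g [N H] g' [N' H']; exists (max N N'); intros j Hj; simpl.
    now rewrite H, H' by lia.
  - intros g [N H] g' [N' H']; exists (max N N'); intros j Hj; simpl.
    now rewrite H, H' by lia.
  - intros psi [N H]; exists N; intros j Hj. rewrite !sat_SE_countdown. now apply H.
  - intros psi [N H]; exists N; intros j Hj. rewrite !sat_SA_countdown. now apply H.
  - intros psi _; exists 0; intros j _; simpl.
    split; intros [pi [Hc _]]; exfalso; eapply countdown_no_Cyc; eauto.
  - intros psi _; exists 0; intros j _; simpl.
    split; intros _ pi Hc; exfalso; eapply countdown_no_Cyc; eauto.
  - intros g [N H]; exists N; exact H.
  - intros a [N H]; exists N; intros j Hj; simpl; now rewrite H.
  - intros a [N H] b [N' H']; exists (max N N'); intros j Hj; simpl.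
    now rewrite H, H' by lia.
  - intros a [N H] b [N' H']; exists (max N N'); intros j Hj; simpl.
    now rewrite H, H' by lia.
  - intros a [N H]; exists (S N); intros [|j] Hj; [lia|].
    rewrite !sat_PX_countdown. apply H; lia.
  - intros a [Na Ha] b [Nb Hb]; exists (max Na Nb); intros j Hj.
    pose proof (sat_PU_countdown (Some (S j)) a b) as Hunfold_Sj.
    pose proof (sat_PU_countdown (Some j) a b) as Hunfold_j.
    simpl in Hunfold_Sj. rewrite Ha, Hb in Hunfold_Sj by lia. tauto.
Qed.

End Countdown.

Definition loop (AP : Type) : Kripke AP.
Proof.
  refine {| W := unit; R := fun _ _ => True; L := fun _ _ => True; wI := tt |}.
  - exists (fun _ => 0). now intros [] [].
  - intros; now exists tt.
Defined.

Definition ray (AP : Type) : Kripke AP.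
Proof.
  refine {| W := nat; R := fun i j => j = S i; L := fun _ _ => True; wI := 0 |}.
  - now exists (fun x => x).
  - intros w; now exists (S w).
Defined.

Definition ray_to_loop {AP} : W (ray AP) -> W (loop AP) := fun _ => tt.

Lemma ray_to_loop_label {AP} w a : L (ray AP) w a <-> L (loop AP) (ray_to_loop w) a.
Proof. reflexivity. Qed.

Lemma ray_to_loop_forth {AP} w v :
  R (ray AP) w v -> R (loop AP) (ray_to_loop w) (ray_to_loop v).
Proof. now simpl. Qed.

Lemma ray_to_loop_back {AP} w u :
  R (loop AP) (ray_to_loop w) u -> exists v, R (ray AP) w v /\ ray_to_loop v = u.
Proof. intros _; exists (S w); split; [reflexivity | now destruct u]. Qed.

Lemma ray_to_loop_lift {AP} w pi1 : Pth (loop AP) (ray_to_loop w) pi1 ->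
  exists pi2, Pth (ray AP) w pi2 /\ (fun i => ray_to_loop (pi2 i)) = pi1.
Proof.
  intros _. exists (fun i => w + i). split.
  - split; [intro i; simpl; lia | simpl; lia].
  - apply functional_extensionality; intro i. now destruct (pi1 i).
Qed.

Lemma loop_models_Ec {AP} (p : AP) : models (loop AP) (SEc (PState (SAtom p))).
Proof.
  exists (fun _ => tt); repeat split; simpl; auto.
  intro i; exists (S i); split; [lia | reflexivity].
Qed.

Lemma ray_not_models_Ec {AP} (p : AP) : ~ models (ray AP) (SEc (PState (SAtom p))).
Proof.
  intros [pi [[[Hpi Hcyc] H0] _]].
  assert (Hid : forall k, pi k = k).
  { induction k; [exact H0|]. now rewrite (Hpi k), IHk. }
  destruct (Hcyc 0) as [j [Hj Hret]]. rewrite !Hid in Hret. lia.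
Qed.

Definition nu_even {AP} (p : AP) : mu AP :=
  MNu 0 (MAnd (MAtom p) (MBox (MBox (MVar 0)))).

Lemma nu_even_odd {AP} (p : AP) k :
  mu_models (reroot (countdown AP) (Some (2 * k + 1))) (nu_even p).
Proof.
  exists (fun w : option nat => w = None \/ exists i, w = Some (2 * i + 1)).
  split; [|right; now exists k].
  intros v Hv; split.
  - destruct Hv as [-> | [i ->]]; [discriminate | intro H; injection H; lia].
  - intros v1 -> v2 ->; cbn [upd Nat.eqb].
    destruct Hv as [-> | [[|i] ->]]; [now left | now left|].
    replace (2 * S i + 1) with (S (S (2 * i + 1))) by lia.
    right; now exists i.
Qed.

Lemma nu_even_even {AP} (p : AP) k :
  ~ mu_models (reroot (countdown AP) (Some (2 * k))) (nu_even p).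
Proof.
  intros [X [Hpost HX]].
  assert (Hstep : forall v, X v -> v <> Some 0 /\ X (countdown_step (countdown_step v))).
  { intros v Hv; destruct (Hpost v Hv) as [Hp Hbox].
    exact (conj Hp (Hbox _ eq_refl _ eq_refl)). }
  clear Hpost. revert HX; generalize k at 1; intro m.
  induction m as [|m IHm]; intro HX.
  - now apply (proj1 (Hstep _ HX)).
  - apply IHm. replace (2 * S m) with (S (S (2 * m))) in HX by lia.
    exact (proj2 (Hstep _ HX)).
Qed.

Lemma ctlscd_eventually_constant_countdown {AP} (f : sform AP) :
  exists N, forall n, N <= n ->
    (models (reroot (countdown AP) (Some n)) f <->
     models (reroot (countdown AP) (Some N)) f).
Proof.
  destruct (eventually_stable_const _ (proj1 (countdown_eventually_stable AP) f))
    as [N HN].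
  exists N; intros n Hn. rewrite !models_reroot. now apply HN.
Qed.

Theorem mainTheorem6 (AP : Type) (AP_finite : exists l : list AP, forall a, In a l)
  (p : AP) :
  (exists phi : sform AP, forall chi : sform AP, is_ctls_s chi ->
      ~ (forall K : Kripke AP, models K phi <-> models K chi))
  /\
  (exists phi : sform AP, forall chi : mu AP,
      ~ (forall K : Kripke AP, models K phi <-> mu_models K chi))
  /\
  (exists chi : mu AP, forall phi : sform AP,
      ~ (forall K : Kripke AP, mu_models K chi <-> models K phi)).
Proof.
  split; [|split].
  - exists (SEc (PState (SAtom p))). intros chi Hchi Heq.
    apply (ray_not_models_Ec p), Heq.
    apply (proj1 (ctls_invariant_morphism AP (loop AP) (ray AP) ray_to_loop
             ray_to_loop_label ray_to_loop_forth ray_to_loop_lift) chi Hchi (wI (ray AP))).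
    apply Heq, loop_models_Ec.
  - exists (SEc (PState (SAtom p))). intros chi Heq.
    apply (ray_not_models_Ec p), Heq.
    apply (msem_invariant_morphism AP (loop AP) (ray AP) ray_to_loop ray_to_loop_label
             ray_to_loop_forth ray_to_loop_back chi (fun _ _ => False) (fun _ _ => False));
      [tauto|].
    apply Heq, loop_models_Ec.
  - exists (nu_even p). intros f Heq.
    destruct (ctlscd_eventually_constant_countdown f) as [N HN].
    apply (nu_even_even p N), Heq, (HN (2 * N)); [lia|].
    apply (HN (2 * N + 1)); [lia|]. apply Heq, nu_even_odd.
Qed.
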